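(* Let $h=(v_0,v_1,\dots,v_{n+1})$ be a Hamiltonian cycle over $N$ for an FSTSP instance $(n,N,t_R,t_D)$, and let $0\le i<j<k\le n+1$ be such that the drone is fast in operation $o_{i,j,k}$ (with respect to $h$). Then there exists an optimal solution of the h-FSTSP for $h$ that contains no operation of the form $o_{i',j,k'}$ with $0\le i'\le i$, $k\le k'\le n+1$ and $(i',k')\neq(i,k)$. That is, all such operations can be ignored by an algorithm for the h-FSTSP without losing optimality.
   Context: An FSTSP instance consists of an integer $n>0$, the set of customers $C=\{1,\dots,n\}$, the node set $N=\{0,1,\dots,n+1\}$ where $0$ and $n+1$ both denote the depot, and nonnegative truck travel times $t_R(u,v)$ and drone travel times $t_D(u,v)$ for all pairs of nodes $u,v$. An operation is a pair $o=(r,d)$: $r=(v^r_1,\dots,v^r_{|r|})$, $|r|\ge 2$, is the truck path with time $t(r)=\sum_{\ell=1}^{|r|-1} t_R(v^r_\ell,v^r_{\ell+1})$; $d$ is either empty or $d=(v^r_1,v^d,v^r_{|r|})$ with $v^d\in C$ a drone node not on $r$, with time $t(d)=t_D(v^r_1,v^d)+t_D(v^d,v^r_{|r|})$. The time of the operation is $t(o)=\max\{t(r),t(d)\}$ if $d$ is nonempty and $t(o)=t(r)$ otherwise. A solution is a sequence $S=(o_1,\dots,o_m)$ of operations $o_\ell=(r_\ell,d_\ell)$ such that the first node of $r_1$ is the depot $0$, the last node of $r_m$ is the depot $n+1$, the depot appears in no other position, for each $\ell<m$ the last node of $r_\ell$ equals the first node of $r_{\ell+1}$, and every customer is served exactly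 once (as a truck node, shared endpoints of consecutive truck paths counting once, or as a drone node). Its time is $t(S)=\sum_\ell t(o_\ell)$. A Hamiltonian cycle over $N$ is a sequence $h=(v_0,\dots,v_{n+1})$ with $v_0=0$, $v_{n+1}=n+1$ and $(v_1,\dots,v_n)$ a permutation of $C$. A solution respects $h$ if the truck nodes, in order of visit, appear in the same relative order as in $h$ and every drone node lies strictly between its operation's launch and rendezvous nodes in $h$; the h-FSTSP asks for a minimum-time solution among those respecting $h$. For indices $i<j<k$, $o_{i,j,k}=(r,d)$ denotes the operation with truck path $r=(v_i,\dots,v_{j-1},v_{j+1},\dots,v_k)$ and drone path $d=(v_i,v_j,v_k)$. The drone is fast in $o_{i,j,k}$ if $t(d)\le t(r)$. *)

(* Nodes are natural numbers 0..n+1 (0 and n+1 = depot),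
   customers are 1..n. Travel times take values in an abstract real domain R. *)
From mathcomp Require Import all_boot all_order all_algebra.
Set Implicit Arguments. Unset Strict Implicit. Unset Printing Implicit Defensive.
Import Order.TTheory GRing.Theory Num.Theory.
Local Open Scope ring_scope.

(* An operation o = (r, d): r the truck path, d = Some v for drone node v
   (drone path (head r, v, last r)), d = None for an empty drone path. *)
Definition operation := (seq nat * option nat)%type.

Section FSTSP.
Variables (R : realDomainType) (n : nat) (tR tD : nat -> nat -> R).

Definition truck_time (r : seq nat) : R :=
  \sum_(p <- zip r (behead r)) tR p.1 p.2.

Definition drone_time (r : seq nat) (v : nat) : R :=
  tD (head 0%N r) v + tD v (last 0%N r).

Definition op_time (o : operation) : R :=
  match o.2 with
  | Some v => Num.max (truck_time o.1) (drone_time o.1 v)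
  | None => truck_time o.1
  end.

Definition sol_time (S : seq operation) : R := \sum_(o <- S) op_time o.

Definition is_customer (v : nat) : bool := (1 <= v <= n)%N.

Definition op_wf (o : operation) : bool :=
  [&& (2 <= size o.1)%N, all (fun v => v <= n.+1)%N o.1 &
      match o.2 with Some v => is_customer v && (v \notin o.1) | None => true end].

(* truck nodes in order of visit, shared endpoints counted once *)
Definition truck_nodes (S : seq operation) : seq nat :=
  match S with
  | [::] => [::]
  | o :: S' => o.1 ++ flatten [seq behead o'.1 | o' <- S']
  end.

Definition drone_nodes (S : seq operation) : seq nat := pmap snd S.

Fixpoint linked (S : seq operation) : bool :=
  match S with
  | o1 :: ((o2 :: _) as S') => (last 0%N o1.1 == head 0%N o2.1) && linked S'
  | _ => true
  end.

Definition is_solution (S : seq operation) : bool :=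
  [&& S != [::], all op_wf S, linked S,
      head 0%N (truck_nodes S) == 0%N,
      last 0%N (truck_nodes S) == n.+1,
      count_mem 0%N (truck_nodes S) == 1%N,
      count_mem n.+1 (truck_nodes S) == 1%N &
      all (fun c => count_mem c (truck_nodes S) + count_mem c (drone_nodes S) == 1)%N
          (iota 1 n)].

Definition hamiltonian (h : seq nat) : Prop :=
  [/\ size h = n.+2, nth 0%N h 0 = 0%N, nth 0%N h n.+1 = n.+1 &
      perm_eq (drop 1 (take n.+1 h)) (iota 1 n)].

Definition respects (h : seq nat) (S : seq operation) : bool :=
  subseq (truck_nodes S) h &&
  all (fun o => match o.2 with
                | Some v => (index (head 0%N o.1) h < index v h < index (last 0%N o.1) h)%N
                | None => true end) S.

Definition optimal_h (h : seq nat) (S : seq operation) : Prop :=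
  is_solution S /\ respects h S /\
  forall S', is_solution S' -> respects h S' -> sol_time S <= sol_time S'.

Definition op_ijk (h : seq nat) (i j k : nat) : operation :=
  ([seq nth 0%N h l | l <- iota i (k - i).+1 & l != j], Some (nth 0%N h j)).

Definition drone_fast (o : operation) : Prop :=
  match o.2 with Some v => drone_time o.1 v <= truck_time o.1 | None => False end.

End FSTSP.

(* Fix an optimal solution S of the h-FSTSP.  If S uses an operation o_{i',j,k'} that strictly
   contains o_{i,j,k}, its truck path splits as P ++ B ++ Q, where B is the truck path of
   o_{i,j,k}.  Replace it by a truck-only leg through P up to v_i, then o_{i,j,k}, then a truck-only
   leg from v_k through Q.  The result is again a solution respecting h, and since the drone of
   o_{i,j,k} is fast its cost is t_R(P v_i) + t_R(B) + t_R(v_k Q) = t_R(P B Q) <= t(o_{i',j,k'}),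
   so it is optimal as well.  Its only operation launching the drone to v_j is o_{i,j,k}, since
   every customer is served exactly once. *)

From mathcomp Require Import all_boot all_order all_algebra.
From mathcomp Require Import zify.
From Stdlib Require Import Classical.
Set Implicit Arguments. Unset Strict Implicit. Unset Printing Implicit Defensive.
Import Order.TTheory GRing.Theory Num.Theory.
Local Open Scope ring_scope.

Fixpoint seqs_upto (T : Type) (m : nat) (A : seq T) : seq (seq T) :=
  if m is m'.+1 then [::] :: [seq x :: s | x <- A, s <- seqs_upto m' A] else [:: [::]].

Lemma mem_seqs_upto (T : eqType) (m : nat) (A s : seq T) :
  (size s <= m)%N -> {subset s <= A} -> s \in seqs_upto m A.
Proof.
elim: m s => [|m IH] [|x s] //= le_sm sA; rewrite in_cons; apply/orP; right.
apply: (allpairs_f (fun x s => x :: s)); first exact/sA/mem_head.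
by apply: IH => // y ys; apply/sA/mem_behead.
Qed.

Lemma has_minimum (R : realDomainType) (T : eqType) (f : T -> R) (P : pred T) (s : seq T) :
  has P s -> exists2 x, P x & forall y, y \in s -> P y -> f x <= f y.
Proof.
elim: s => //= a s IH; case: (boolP (has P s)) => [/IH[x Px xmin] _ | /hasPn noPs].
  have [/andP[Pa ltax]|] := boolP (P a && (f a < f x)).
    exists a => // y; rewrite inE => /predU1P[-> //|ys Py].
    exact: le_trans (ltW ltax) (xmin y ys Py).
  rewrite negb_and -leNgt => Ha; exists x => // y; rewrite inE => /predU1P[->|/xmin//] Pa.
  by rewrite Pa in Ha.
rewrite orbF => Pa; exists a => // y; rewrite inE => /predU1P[-> //|/noPs/negP nPy /nPy []].
Qed.

Section Times.
Variables (R : realDomainType) (tR tD : nat -> nat -> R).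

Lemma truck_time_cons x y s : truck_time tR [:: x, y & s] = tR x y + truck_time tR (y :: s).
Proof. by rewrite /truck_time big_cons. Qed.

Lemma truck_time_short s : (size s <= 1)%N -> truck_time tR s = 0.
Proof. by case: s => [|x [|]] //= _; rewrite /truck_time big_nil. Qed.

Lemma truck_time_cat s x t :
  truck_time tR (s ++ x :: t) = truck_time tR (rcons s x) + truck_time tR (x :: t).
Proof.
elim: s => [|y s IH]; first by rewrite (truck_time_short (s := [:: x])) ?add0r.
case: s IH => [|z s] IH.
  by rewrite /= !truck_time_cons (truck_time_short (s := [:: x])) ?addr0.
by rewrite [LHS]truck_time_cons -cat_cons IH rcons_cons [rcons _ _]/= truck_time_cons addrA.
Qed.

Lemma truck_time_cat3 P B Q : B != [::] ->
  truck_time tR (P ++ B ++ Q) = truck_time tR (rcons P (head 0%N B)) + truck_time tR B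
                                + truck_time tR (last 0%N B :: Q).
Proof.
case: B => // b B _; rewrite truck_time_cat -addrA; congr (_ + _).
by rewrite -cat_cons lastI cat_rcons truck_time_cat -lastI.
Qed.

Lemma sol_time_cat S1 S2 : sol_time tR tD (S1 ++ S2) = sol_time tR tD S1 + sol_time tR tD S2.
Proof. exact: big_cat. Qed.

Lemma sol_time_cons o S : sol_time tR tD (o :: S) = op_time tR tD o + sol_time tR tD S.
Proof. exact: big_cons. Qed.

End Times.

(* The truck nodes a block of operations adds after a predecessor, whose rendezvous node is
   the launch node of the block. *)
Definition truck_tail (S : seq operation) : seq nat := flatten [seq behead o.1 | o <- S].

Lemma truck_tail_cat S1 S2 : truck_tail (S1 ++ S2) = truck_tail S1 ++ truck_tail S2.
Proof. by rewrite /truck_tail map_cat flatten_cat. Qed.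

Lemma truck_tail_cons o S : truck_tail (o :: S) = behead o.1 ++ truck_tail S.
Proof. by []. Qed.

Lemma truck_nodes_cons o S : truck_nodes (o :: S) = o.1 ++ truck_tail S.
Proof. by []. Qed.

Lemma truck_nodes_cat (S1 S2 : seq operation) : S1 != [::] ->
  truck_nodes (S1 ++ S2) = truck_nodes S1 ++ truck_tail S2.
Proof. by case: S1 => // o S1 _; rewrite cat_cons !truck_nodes_cons truck_tail_cat catA. Qed.

Lemma truck_tail_behead o S :
  o.1 != [::] -> truck_tail (o :: S) = behead (truck_nodes (o :: S)).
Proof. by case: o => -[]. Qed.

Lemma truck_nodes_replace pre o post N : N != [::] -> (head o N).1 != [::] ->
  truck_nodes N = o.1 -> truck_nodes (pre ++ N ++ post) = truck_nodes (pre ++ o :: post).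
Proof.
case: N => // o1 N _ o1_nil tnN; case: pre => [|p pre].
  by rewrite !cat0s truck_nodes_cat // tnN.
rewrite !(cat_cons p) !truck_nodes_cons !truck_tail_cat truck_tail_behead // tnN.
by rewrite [truck_tail (o :: _)]/truck_tail.
Qed.

Definition chained (a b : operation) : bool := last 0%N a.1 == head 0%N b.1.

Lemma linked_sorted S : linked S = sorted chained S.
Proof.
by elim: S => [|a [|b S] IH] //; rewrite -[linked _]/(chained a b && linked (b :: S)) IH.
Qed.

Lemma linked_replace pre o post N : N != [::] -> linked N ->
  head 0%N (head o N).1 = head 0%N o.1 -> last 0%N (last o N).1 = last 0%N o.1 ->
  linked (pre ++ o :: post) -> linked (pre ++ N ++ post).
Proof.
case: N => // o1 N _; rewrite !linked_sorted /= => linN hd lst.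
have mid : path chained o1 (N ++ post) = path chained o post.
  by rewrite cat_path linN; case: post => //= o2 post; rewrite /chained lst.
case: pre => [|p pre] /=; first by rewrite mid.
by rewrite !cat_path /= mid /chained hd.
Qed.

Definition drone_between (h : seq nat) (o : operation) : bool :=
  if o.2 is Some v then (index (head 0%N o.1) h < index v h < index (last 0%N o.1) h)%N
  else true.

Lemma respectsE h S : respects h S = subseq (truck_nodes S) h && all (drone_between h) S.
Proof. by []. Qed.

Section Replacement.
Variables (n : nat) (pre post N : seq operation) (o : operation).
Hypotheses (N_neq0 : N != [::]) (wf_N : all (op_wf n) N) (tnN : truck_nodes N = o.1).

Let first_nonnil : (head o N).1 != [::].
Proof. by case: N N_neq0 wf_N => // o1 N' _ /andP[/andP[+ _] _]; case: (o1.1). Qed.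

Let tn_replace := truck_nodes_replace pre post N_neq0 first_nonnil tnN.

Lemma replace_op_solution :
  linked N -> last 0%N (last o N).1 = last 0%N o.1 -> drone_nodes N = drone_nodes [:: o] ->
  is_solution n (pre ++ o :: post) -> is_solution n (pre ++ N ++ post).
Proof.
move=> linN lstN dnN.
have hdN : head 0%N (head o N).1 = head 0%N o.1.
  by rewrite -tnN; case: N N_neq0 first_nonnil => // o1 N' _ /=; case: (o1.1).
have dn : drone_nodes (pre ++ N ++ post) = drone_nodes (pre ++ o :: post).
  by rewrite /drone_nodes -cat1s !pmap_cat; congr (_ ++ (_ ++ _)).
rewrite /is_solution tn_replace dn => /and4P[_ wfS linS ->].
rewrite andbT; apply/and3P; split; last exact: linked_replace linS.
- by case: pre; case: N N_neq0.
- by move: wfS; rewrite !all_cat /= wf_N => /and3P[-> _ ->].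
Qed.

Lemma replace_op_respects h :
  all (drone_between h) N -> respects h (pre ++ o :: post) -> respects h (pre ++ N ++ post).
Proof.
move=> dbN; rewrite !respectsE tn_replace => /andP[-> /=].
by rewrite !all_cat dbN /= => /and3P[-> _ ->].
Qed.

End Replacement.

Lemma drone_op_unique n S x y v : is_solution n S -> x \in S -> y \in S ->
  x.2 = Some v -> y.2 = Some v -> x = y.
Proof.
move=> solS xS yS xv yv; apply/eqP; apply: contraT => neq.
case/and4P: solS => _ wfS _ /and5P[_ _ _ _ /allP once].
have : is_customer n v by move: (allP wfS x xS); rewrite /op_wf xv => /and3P[_ _ /andP[]].
rewrite /is_customer => cv; have := once v; rewrite mem_iota => /(_ ltac:(lia)) /eqP.
case/splitPr: xS yS => pre post yS.
have {}yS : y \in pre ++ post by move: yS; rewrite !mem_cat in_cons eq_sym (negbTE neq).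
have : (0 < count_mem v (pmap snd (pre ++ post)))%N.
  by rewrite -has_count has_pred1 mem_pmap -yv map_f.
by rewrite /drone_nodes !pmap_cat /= xv !count_cat /= eqxx; lia.
Qed.

(* A truck leg along a single node is no operation at all: this covers i' = i and k' = k. *)
Definition truck_leg (p : seq nat) : seq operation :=
  if (1 < size p)%N then [:: (p, None)] else [::].

Definition split_op (P B Q : seq nat) (v : nat) : seq operation :=
  truck_leg (rcons P (head 0%N B)) ++ (B, Some v) :: truck_leg (last 0%N B :: Q).

Lemma truck_tail_leg p : truck_tail (truck_leg p) = behead p.
Proof.
by rewrite /truck_leg; case: ifP => [_|]; [rewrite /truck_tail /= cats0 | case: p => [|? []]].
Qed.

Lemma op_wf_leg n p : all (fun v => v <= n.+1)%N p -> all (op_wf n) (truck_leg p).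
Proof. by rewrite /truck_leg; case: ifP => //= lt1p lep; rewrite andbT; apply/and3P. Qed.

Lemma split_op_neq0 P B Q v : split_op P B Q v != [::].
Proof. by rewrite /split_op -size_eq0 size_cat /= addnS. Qed.

Lemma mem_split_op (pre post : seq operation) P B Q v :
  (B, Some v) \in pre ++ split_op P B Q v ++ post.
Proof.
rewrite (@mem_cat _ _ pre) (@mem_cat _ _ (split_op _ _ _ _)) /split_op.
by rewrite (@mem_cat _ _ (truck_leg _)) in_cons eqxx !orbT.
Qed.

Section SplitOperation.
Variables (P B Q : seq nat) (v : nat).
Hypothesis B_neq0 : B != [::].

Lemma truck_nodes_split : truck_nodes (split_op P B Q v) = P ++ B ++ Q.
Proof.
rewrite /split_op; case: B B_neq0 => // b B' _; case: P => [|p P'].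
  by rewrite (_ : truck_leg _ = [::]) // cat0s truck_nodes_cons truck_tail_leg.
rewrite (_ : truck_leg _ = [:: (rcons (p :: P') b, None)]); last by rewrite /truck_leg size_rcons.
by rewrite cat1s truck_nodes_cons truck_tail_cons truck_tail_leg cat_rcons.
Qed.

Lemma last_split_op o : last 0%N (last o (split_op P B Q v)).1 = last 0%N (P ++ B ++ Q).
Proof.
rewrite /split_op last_cat /= /truck_leg /= !last_cat.
by case: Q => [|q Q'] /=; case: B B_neq0.
Qed.

Lemma linked_split_op : linked (split_op P B Q v).
Proof.
rewrite linked_sorted /split_op /truck_leg size_rcons.
by case: P => [|p P'] /=; case: Q => [|q Q'] //=; rewrite /chained /= ?last_rcons ?eqxx.
Qed.

Lemma op_wf_split n : (1 < size B)%N ->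
  op_wf n (P ++ B ++ Q, Some v) -> all (op_wf n) (split_op P B Q v).
Proof.
move=> lt1B /and3P[_ leN /= /andP[cv vN]].
move: leN vN; rewrite !all_cat !mem_cat !negb_or => /and3P[leP leB leQ] /and3P[_ vB _].
have [b0B blB] : head 0%N B \in B /\ last 0%N B \in B.
  by case: B B_neq0 => // b B' _; split; [exact: mem_head | exact: mem_last].
rewrite /split_op /= !op_wf_leg //=; first by rewrite /op_wf /= lt1B leB cv vB.
  by rewrite (allP leB _ blB).
by rewrite all_rcons (allP leB _ b0B).
Qed.

Lemma drone_nodes_split : drone_nodes (split_op P B Q v) = [:: v].
Proof. by rewrite /split_op /truck_leg; do 2 case: ifP. Qed.

Lemma drone_between_split h :
  all (drone_between h) (split_op P B Q v) = drone_between h (B, Some v).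
Proof. by rewrite /split_op /truck_leg; do 2 case: ifP => _ /=; rewrite ?andbT. Qed.

Variables (R : realDomainType) (tR tD : nat -> nat -> R).

Lemma sol_time_leg p : sol_time tR tD (truck_leg p) = truck_time tR p.
Proof.
rewrite /truck_leg /sol_time; case: ifP => [_|]; first by rewrite big_seq1.
by rewrite big_nil ltnNge => /negbFE/truck_time_short ->.
Qed.

Lemma sol_time_split_le : drone_fast tR tD (B, Some v) ->
  sol_time tR tD (split_op P B Q v) <= op_time tR tD (P ++ B ++ Q, Some v).
Proof.
rewrite /drone_fast /= => fast.
rewrite sol_time_cat sol_time_cons !sol_time_leg /op_time /= (max_l fast).
by rewrite addrA truck_time_cat3 // le_max lexx.
Qed.

End SplitOperation.

Section SplitOptimal.
Variables (R : realDomainType) (n : nat) (tR tD : nat -> nat -> R) (h : seq nat).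

Lemma optimal_h_le S S' : optimal_h n tR tD h S -> is_solution n S' -> respects h S' ->
  sol_time tR tD S' <= sol_time tR tD S -> optimal_h n tR tD h S'.
Proof.
move=> [_ [_ minS]] solS' resS' leS'; split=> //; split=> // S'' solS'' resS''.
exact: le_trans leS' (minS _ _ _).
Qed.

Lemma split_op_optimal pre post P B Q v :
  (1 < size B)%N -> drone_between h (B, Some v) -> drone_fast tR tD (B, Some v) ->
  optimal_h n tR tD h (pre ++ (P ++ B ++ Q, Some v) :: post) ->
  optimal_h n tR tD h (pre ++ split_op P B Q v ++ post).
Proof.
move=> lt1B dbB fast optS; have [solS [resS _]] := optS.
have B_neq0 : B != [::] by rewrite -size_eq0 -lt0n (ltn_trans _ lt1B).
set o : operation := (P ++ B ++ Q, Some v).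
have wfo : op_wf n o by case/and3P: solS => _ /allP-> //; rewrite mem_cat mem_head orbT.
have wfN : all (op_wf n) (split_op P B Q v) by exact: op_wf_split.
have tnN : truck_nodes (split_op P B Q v) = o.1 by exact: truck_nodes_split.
apply: optimal_h_le optS _ _ _.
- apply: (replace_op_solution (split_op_neq0 _ _ _ _) wfN tnN _ _ _ solS).
  + exact: linked_split_op.
  + exact: last_split_op.
  + exact: drone_nodes_split.
- apply: (replace_op_respects (split_op_neq0 _ _ _ _) wfN tnN _ resS).
  by rewrite drone_between_split.
- rewrite !(sol_time_cat _ _ pre) (sol_time_cat _ _ (split_op _ _ _ _)) sol_time_cons.
  by rewrite lerD2l lerD2r sol_time_split_le.
Qed.

End SplitOptimal.

Section Candidates.
Variable n : nat.

(* A solution respecting h has at most n+2 truck nodes, hence at most n+2 operations, each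
   with at most n+3 truck nodes: all of them occur in this finite list. *)
Definition candidate_ops : seq operation :=
  [seq (r, d) | r <- seqs_upto n.+3 (iota 0 n.+2), d <- None :: map Some (iota 0 n.+2)].

Definition candidate_solutions : seq (seq operation) := seqs_upto n.+2 candidate_ops.

Lemma size_truck_tail S : size (truck_tail S) = (\sum_(o <- S) (size o.1).-1)%N.
Proof.
rewrite /truck_tail size_flatten sumnE /shape !big_map.
by under eq_bigr do rewrite size_behead.
Qed.

Lemma size_solution_le S : all (op_wf n) S -> (size S <= size (truck_nodes S))%N.
Proof.
case: S => // o S /andP[/and3P[szo _ _] wfS].
rewrite truck_nodes_cons size_cat size_truck_tail /= -add1n; apply: leq_add; first exact: ltnW.
rewrite -sum1_size big_seq_cond [X in (_ <= X)%N]big_seq_cond.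
apply: leq_sum => o' /andP[o'S _].
by case/and3P: (allP wfS o' o'S); case: (o'.1) => [|? []].
Qed.

Lemma size_op_le S o : o \in S -> (size o.1 <= (size (truck_nodes S)).+1)%N.
Proof.
case: S => // o0 S; rewrite inE truck_nodes_cons size_cat => /predU1P[-> | oS].
  exact: ltnW (leq_addr _ _).
rewrite size_truck_tail (big_rem o oS) /=; apply: leq_trans (leqSpred _) _.
by rewrite ltnS addnCA leq_addr.
Qed.

Lemma solution_mem_candidates h S :
  size h = n.+2 -> is_solution n S -> respects h S -> S \in candidate_solutions.
Proof.
move=> szh /and3P[_ wfS _] /andP[/size_subseq le_tn _]; rewrite szh in le_tn.
apply: mem_seqs_upto; first exact: leq_trans (size_solution_le wfS) le_tn.
move=> [r d] oS; have /and3P[_ /= le_r /= wf_d] := allP wfS _ oS.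
apply: (allpairs_f (fun r d => (r, d))).
  apply: mem_seqs_upto; first exact: leq_trans (size_op_le oS) _.
  by move=> u /(allP le_r); rewrite mem_iota.
case: d wf_d {oS} => [u /andP[/andP[_ leu] _]|_]; last exact: mem_head.
by rewrite inE map_f ?orbT // mem_iota ltnS (leq_trans leu).
Qed.

Lemma exists_optimal_h (R : realDomainType) (tR tD : nat -> nat -> R) h S :
  size h = n.+2 -> is_solution n S -> respects h S -> exists S0, optimal_h n tR tD h S0.
Proof.
move=> szh solS resS.
have hasS : has (fun S => is_solution n S && respects h S) candidate_solutions.
  by apply/hasP; exists S; [exact: solution_mem_candidates szh solS resS | rewrite solS resS].
have [S0 /andP[solS0 resS0] minS0] := has_minimum (sol_time tR tD) hasS.
exists S0; split=> //; split=> // S' solS' resS'.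
by apply: minS0; [exact: solution_mem_candidates szh solS' resS' | rewrite solS' resS'].
Qed.

End Candidates.

Section Hamiltonian.
Variables (n : nat) (h : seq nat).
Hypothesis hamh : hamiltonian n h.

Lemma size_hamiltonian : size h = n.+2.
Proof. by case: hamh. Qed.

Lemma hamiltonianP : exists2 m, h = 0%N :: rcons m n.+1 & perm_eq m (iota 1 n).
Proof.
case: hamh; case: h => [|x t] //= [szt] -> tn; rewrite ?drop0 => pm.
exists (take n t) => //; congr (_ :: _).
by rewrite -{1}(cat_take_drop n t) (drop_nth 0%N) ?szt // drop_oversize ?szt // tn cats1.
Qed.

Lemma mem_hamiltonian x : (x \in h) = (x <= n.+1)%N.
Proof.
have [m -> pm] := hamiltonianP; rewrite in_cons mem_rcons in_cons (perm_mem pm) mem_iota.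
by apply/idP/idP; lia.
Qed.

Lemma hamiltonian_uniq : uniq h.
Proof.
have [m -> pm] := hamiltonianP.
rewrite /= rcons_uniq mem_rcons in_cons !(perm_mem pm) (perm_uniq pm) iota_uniq !mem_iota.
by apply/and3P; split; lia.
Qed.

Lemma hamiltonian_solution : is_solution n [:: (h, None)] && respects h [:: (h, None)].
Proof.
have [m Eh _] := hamiltonianP.
have tn : truck_nodes [:: (h, None)] = h by rewrite truck_nodes_cons cats0.
rewrite /is_solution /respects tn subseq_refl /= !andbT !count_uniq_mem ?hamiltonian_uniq //.
rewrite !mem_hamiltonian // ltnSn /op_wf /= size_hamiltonian /= andbT.
apply/and4P; split.
- by apply/allP => x; rewrite mem_hamiltonian.
- by rewrite Eh.
- by rewrite Eh /= last_rcons.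
- apply/allP => c; rewrite mem_iota addn0 count_uniq_mem ?hamiltonian_uniq // => ?.
  by rewrite mem_hamiltonian (_ : (c <= n.+1)%N = true) //; lia.
Qed.

End Hamiltonian.

Lemma op_ijk_path h i j k : (i <= j <= k)%N ->
  (op_ijk h i j k).1 = map (nth 0%N h) (iota i (j - i) ++ iota j.+1 (k - j)).
Proof.
move=> /andP[le_ij le_jk].
have keep a m : (j < a)%N || (a + m <= j)%N -> [seq l <- iota a m | l != j] = iota a m.
  by move=> out; apply/all_filterP/allP => l; rewrite mem_iota => ?; apply/eqP; lia.
rewrite -[LHS]/(map (nth 0%N h) [seq l <- iota i (k - i).+1 | l != j]).
rewrite (_ : (k - i).+1 = j - i + (1 + (k - j)))%N; last lia.
rewrite !iotaD (subnKC le_ij) addn1 !filter_cat (keep i) ?(keep j.+1) /= ?eqxx //; lia.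
Qed.

Section OpIJK.
Variables (h : seq nat) (i j k : nat).
Hypotheses (lt_ij : (i < j)%N) (lt_jk : (j < k)%N).

Let le_ijk : (i <= j <= k)%N. Proof. by rewrite (ltnW lt_ij) (ltnW lt_jk). Qed.

Lemma size_op_ijk : size (op_ijk h i j k).1 = (k - i)%N.
Proof. by rewrite op_ijk_path // size_map size_cat !size_iota; lia. Qed.

Lemma head_op_ijk : head 0%N (op_ijk h i j k).1 = nth 0%N h i.
Proof. by rewrite op_ijk_path // (_ : j - i = 1 + (j - i).-1)%N ?iotaD //; lia. Qed.

Lemma last_op_ijk : last 0%N (op_ijk h i j k).1 = nth 0%N h k.
Proof.
rewrite op_ijk_path // (_ : k - j = (k - j).-1 + 1)%N; last lia.
by rewrite iotaD catA map_cat last_cat /=; congr nth; lia.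
Qed.

Lemma op_ijk_nested i' k' : (i' <= i)%N -> (k <= k')%N ->
  (op_ijk h i' j k').1 = map (nth 0%N h) (iota i' (i - i')) ++ (op_ijk h i j k).1
                         ++ map (nth 0%N h) (iota k.+1 (k' - k)).
Proof.
move=> le_i'i le_kk'; rewrite !op_ijk_path //; try lia.
rewrite (_ : j - i' = i - i' + (j - i))%N; last lia.
rewrite (_ : k' - j = k - j + (k' - k))%N; last lia.
rewrite iotaD (iotaD j.+1) !map_cat !catA (subnKC le_i'i).
by rewrite (_ : j.+1 + (k - j) = k.+1)%N //; lia.
Qed.

End OpIJK.

Lemma op_ijk_inj h i j k i' k' : uniq h -> (k < size h)%N -> (k' < size h)%N ->
  (i < j < k)%N -> (i' < j < k')%N -> op_ijk h i' j k' = op_ijk h i j k -> (i', k') = (i, k).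
Proof.
move=> uh ltk ltk' /andP[lt_ij lt_jk] /andP[lt_i'j lt_jk'] /(congr1 fst) E.
have hd : nth 0%N h i' == nth 0%N h i.
  by rewrite -(head_op_ijk h lt_i'j lt_jk') E head_op_ijk.
have lst : nth 0%N h k' == nth 0%N h k.
  by rewrite -(last_op_ijk h lt_i'j lt_jk') E last_op_ijk.
rewrite !nth_uniq // in hd lst; try lia.
by rewrite (eqP hd) (eqP lst).
Qed.

Theorem mainTheorem4 (R : realDomainType) (n : nat) (tR tD : nat -> nat -> R)
  (h : seq nat) (i j k : nat) :
  (0 < n)%N ->
  (forall u v, (u <= n.+1)%N -> (v <= n.+1)%N -> 0 <= tR u v /\ 0 <= tD u v) ->
  hamiltonian n h ->
  (i < j)%N -> (j < k)%N -> (k <= n.+1)%N ->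
  drone_fast tR tD (op_ijk h i j k) ->
  exists S : seq operation,
    optimal_h n tR tD h S /\
    (forall i' k', (i' <= i)%N -> (k <= k')%N -> (k' <= n.+1)%N ->
       (i', k') <> (i, k) -> op_ijk h i' j k' \notin S).
Proof.
move=> _ _ hamh lt_ij lt_jk le_kn fast.
have [szh uh] := (size_hamiltonian hamh, hamiltonian_uniq hamh).
have [S0 optS0] : exists S0, optimal_h n tR tD h S0.
  by case/andP: (hamiltonian_solution hamh); exact: exists_optimal_h.
have [[i' [k' [le_i'i le_kk' _ _ inS0]]] | noS0] := classic (exists i' k',
    [/\ (i' <= i)%N, (k <= k')%N, (k' <= n.+1)%N, (i', k') <> (i, k) & op_ijk h i' j k' \in S0]);
  last by exists S0; split=> // i' k' *; apply/negP => ?; apply: noS0; exists i', k'.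
set B := (op_ijk h i j k).1; set v := nth 0%N h j.
rewrite [op_ijk _ _ _ _]surjective_pairing (op_ijk_nested h lt_ij lt_jk le_i'i le_kk') in inS0.
case/splitPr: inS0 optS0 => pre post optS0.
have dbB : drone_between h (B, Some v).
  by rewrite /drone_between /= /B head_op_ijk // last_op_ijk // !index_uniq ?szh //; lia.
have lt1B : (1 < size B)%N by rewrite /B size_op_ijk //; lia.
have optS1 := split_op_optimal lt1B dbB fast optS0.
eexists; split; first exact: optS1.
move=> i'' k'' le_i'' le_k'' le_k''n ne_ik''; apply/negP => inS1; apply: ne_ik''.
apply: (op_ijk_inj (j := j) uh); try by rewrite ?szh; lia.
by apply: (drone_op_unique (proj1 optS1) inS1) => //; exact: mem_split_op.
Qed.
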